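(* Let $\mathsf{\Sigma}\in\mathbb{R}^{N\times N_S}$ and $\mathsf{\Lambda}\in\mathbb{R}^{N\times N_L}$ be the Star-to-RWG and Loop-to-RWG matrices of a triangular surface mesh (so that $\mathsf{\Sigma}^{\mathrm T}\mathsf{\Lambda}=\mathsf{0}$), with $\mathsf{P}^\Sigma=\mathsf{\Sigma}(\mathsf{\Sigma}^{\mathrm T}\mathsf{\Sigma})^+\mathsf{\Sigma}^{\mathrm T}$, $\mathbb{P}^\Lambda=\mathsf{\Lambda}(\mathsf{\Lambda}^{\mathrm T}\mathsf{\Lambda})^+\mathsf{\Lambda}^{\mathrm T}$, and quasi-Helmholtz Laplacian filters $\mathsf{P}_n^\Sigma=\mathsf{\Sigma}((\mathsf{\Sigma}^{\mathrm T}\mathsf{\Sigma})_n)^+\mathsf{\Sigma}^{\mathrm T}$, $\mathbb{P}_n^\Lambda=\mathsf{\Lambda}((\mathsf{\Lambda}^{\mathrm T}\mathsf{\Lambda})_n)^+\mathsf{\Lambda}^{\mathrm T}$, $\mathsf{P}_n^{\Lambda H}=\mathbb{P}_n^\Lambda+\mathsf{I}-\mathsf{P}^\Sigma-\mathbb{P}^\Lambda$, $\mathbb{P}_n^{\Sigma H}=\mathsf{P}_n^\Sigma+\mathsf{I}-\mathbb{P}^\Lambda-\mathsf{P}^\Sigma$ (indices $n$ ranging over $1,\dots,N_S$ for the $\Sigma$-filters and $1,\dots,N_L$ for the $\Lambda$-filters). Then for all admissible $m,n$: $$\mathsf{P}_m^\Sigma\mathsf{P}_n^{\Lambda H}=\mathsf{0}\qquad\text{and}\qquad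 \mathbb{P}_m^\Lambda\mathbb{P}_n^{\Sigma H}=\mathsf{0}.$$
   Context: Consider a closed triangulated surface with $N$ edges, $N_S$ triangles and $N_L$ vertices; $\mathsf{I}$ is the $N\times N$ identity. Each edge $m$ is shared by two triangles $c_m^+$, $c_m^-$. $[\mathsf{\Sigma}]_{mn}=1$ if cell $n$ is $c_m^+$, $-1$ if cell $n$ is $c_m^-$, $0$ otherwise. $[\mathsf{\Lambda}]_{mn}=\pm1$ when vertex $n$ is an endpoint of edge $m$ (opposite signs for the two endpoints, fixed by the orientation convention of the RWG functions), $0$ otherwise; with this convention $\mathsf{\Sigma}^{\mathrm T}\mathsf{\Lambda}=\mathsf{0}$. $^+$ denotes the Moore–Penrose pseudo-inverse. For $\mathsf{X}\in\{\mathsf{\Sigma},\mathsf{\Lambda}\}$ with $N_x$ columns, fix an SVD $\mathsf{X}=\mathsf{U}_X\mathsf{S}_X\mathsf{V}_X^{\mathrm T}$ with $\mathsf{V}_X$ orthogonal $N_x\times N_x$ and singular values $\sigma_{X,1}\ge\dots\ge\sigma_{X,N_x}\ge0$, so $\mathsf{X}^{\mathrm T}\mathsf{X}=\mathsf{V}_X\mathrm{diag}(\sigma_{X,i}^2)\mathsf{V}_X^{\mathrm T}$. For $1\le n\le N_x$, $\mathsf{L}_{X,n}$ is diagonal with $[\mathsf{L}_{X,n}]_{ii}=\sigma_{X,i}$ if $i>N_x-n$ and $0$ otherwise, and $(\mathsf{X}^{\mathrm T}\mathsf{X})_n=\mathsf{V}_X\mathsf{L}_{X,n}^2\mathsf{V}_X^{\mathrm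 T}$. *)

From Stdlib Require Import ClassicalEpsilon.
From mathcomp Require Import all_boot all_order all_algebra.
Set Implicit Arguments. Unset Strict Implicit. Unset Printing Implicit Defensive.
Import Order.TTheory GRing.Theory Num.Theory.
Local Open Scope ring_scope.

Definition is_MP_inverse (R : realFieldType) (m n : nat)
    (A : 'M[R]_(m, n)) (B : 'M[R]_(n, m)) : Prop :=
  [/\ A *m B *m A = A, B *m A *m B = B,
      (A *m B)^T = A *m B & (B *m A)^T = B *m A].

(* Moore-Penrose pseudo-inverse A^+ (it exists and is unique; chosen by
   classical choice among the matrices satisfying the Penrose conditions). *)
Definition pinv (R : realFieldType) (m n : nat) (A : 'M[R]_(m, n)) : 'M[R]_(n, m) :=
  epsilon (inhabits 0) (is_MP_inverse A).

(* "U S V^T is an SVD of X": U (N x N) and V (k x k) orthogonal, sigma the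
   singular values, nonnegative and nonincreasing (index 0 = largest),
   S the N x k rectangular diagonal matrix with diagonal sigma. *)
Definition sv_mx (R : realFieldType) (N k : nat) (sigma : 'I_k -> R) : 'M[R]_(N, k) :=
  \matrix_(i < N, j < k) (if (i == j :> nat) then sigma j else 0).

Definition is_SVD (R : realFieldType) (N k : nat) (X : 'M[R]_(N, k))
    (U : 'M[R]_N) (V : 'M[R]_k) (sigma : 'I_k -> R) : Prop :=
  [/\ U^T *m U = 1%:M /\ U *m U^T = 1%:M, V^T *m V = 1%:M /\ V *m V^T = 1%:M,
      (forall i, 0 <= sigma i),
      (forall i j : 'I_k, (i <= j)%N -> sigma j <= sigma i) &
      X = U *m sv_mx N sigma *m V^T].

(* L_{X,n}: diagonal, [L]_{ii} = sigma_i if i > k - n (1-based), else 0.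
   With 0-based index i' = i - 1 the condition reads k - n <= i'. *)
Definition Lfilt (R : realFieldType) (k : nat) (sigma : 'I_k -> R) (n : nat) : 'M[R]_k :=
  diag_mx (\row_(i < k) (if (k - n <= i)%N then sigma i else 0)).

Definition XtX_n (R : realFieldType) (k : nat) (V : 'M[R]_k) (sigma : 'I_k -> R)
    (n : nat) : 'M[R]_k :=
  V *m (Lfilt sigma n *m Lfilt sigma n) *m V^T.

Definition projP (R : realFieldType) (N k : nat) (X : 'M[R]_(N, k)) : 'M[R]_N :=
  X *m pinv (X^T *m X) *m X^T.

Definition projPn (R : realFieldType) (N k : nat) (X : 'M[R]_(N, k))
    (V : 'M[R]_k) (sigma : 'I_k -> R) (n : nat) : 'M[R]_N :=
  X *m pinv (XtX_n V sigma n) *m X^T.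

(* Each row has exactly one entry +1, one entry -1, all other entries 0
   (edge m shared by c_m^+ and c_m^-; edge endpoints with opposite signs). *)
Definition signed_incidence (R : realFieldType) (N k : nat) (X : 'M[R]_(N, k)) : Prop :=
  forall m : 'I_N, exists p q : 'I_k,
    [/\ p != q, X m p = 1, X m q = -1 &
        forall j, j != p -> j != q -> X m j = 0].

From Stdlib Require Import ClassicalEpsilon.
From mathcomp Require Import all_boot all_order all_algebra.
Set Implicit Arguments. Unset Strict Implicit. Unset Printing Implicit Defensive.
Import Order.TTheory GRing.Theory Num.Theory.
Local Open Scope ring_scope.

(* Every filter [X *m C *m X^T] ends with [X^T], and [X^T] annihilates the
   second factor: the [Y]-parts because [X^T *m Y = 0], and [1 - projP X]
   because [X^T *m X *m B *m (X^T *m X) = X^T *m X] already forces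
   [X^T *m (1 - X *m B *m X^T) = 0] over a real domain.  The Penrose
   conditions hold for the pseudo-inverse chosen in [pinv] because an SVD of
   [X] diagonalises the Gram matrix [X^T *m X] orthogonally.  The incidence
   structure of the mesh and the ranges of the filter indices are never used:
   only [Sig^T *m Lam = 0] and the SVDs matter. *)

Lemma mulmx_trmx_eq0 (R : realDomainType) m n (Y : 'M[R]_(m, n)) :
  Y *m Y^T = 0 -> Y = 0.
Proof.
move=> YYt0; apply/matrixP => i j; rewrite mxE.
have /eqP := congr1 (fun M : 'M[R]_m => M i i) YYt0; rewrite !mxE.
rewrite psumr_eq0 => [/allP/(_ j (mem_index_enum j))|l _]; last first.
  by rewrite mxE -expr2 sqr_ge0.
by rewrite mxE -expr2 sqrf_eq0 => /eqP.
Qed.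

Lemma trmx_mul_projC (R : realDomainType) N k (X : 'M[R]_(N, k)) (B : 'M[R]_k) :
  X^T *m X *m B *m (X^T *m X) = X^T *m X -> X^T *m (1%:M - X *m B *m X^T) = 0.
Proof.
move=> gramBgram.
set M := 1%:M - X^T *m X *m B.
have -> : X^T *m (1%:M - X *m B *m X^T) = M *m X^T.
  by rewrite /M mulmxBr mulmxBl mulmx1 mul1mx !mulmxA.
have M_gram : M *m (X^T *m X) = 0 by rewrite /M mulmxBl mul1mx gramBgram subrr.
apply: mulmx_trmx_eq0.
by rewrite trmx_mul trmxK !mulmxA -(mulmxA M) M_gram mul0mx.
Qed.

Section PseudoInverse.

Variable R : realFieldType.

Lemma is_MP_inverse_orthogonal_diag k (V : 'M[R]_k) (d : 'rV[R]_k) :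
  V^T *m V = 1%:M ->
  is_MP_inverse (V *m diag_mx d *m V^T) (V *m diag_mx (map_mx GRing.inv d) *m V^T).
Proof.
move=> orthoV.
have conj_mul (a b : 'rV[R]_k) :
    V *m diag_mx a *m V^T *m (V *m diag_mx b *m V^T)
    = V *m diag_mx (\row_i (a 0 i * b 0 i)) *m V^T.
  rewrite -!mulmxA (mulmxA V^T) orthoV mul1mx (mulmxA (diag_mx a)) mulmx_diag.
  by congr (_ *m (diag_mx _ *m _)); apply/matrixP => i j; rewrite !mxE (ord1 i).
have conj_sym (a : 'rV[R]_k) : (V *m diag_mx a *m V^T)^T = V *m diag_mx a *m V^T.
  by rewrite !trmx_mul trmxK tr_diag_mx mulmxA.
have conj_eq (a b : 'rV[R]_k) :
    (forall j, a 0 j = b 0 j) -> V *m diag_mx a *m V^T = V *m diag_mx b *m V^T.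
  by move=> ab; congr (_ *m diag_mx _ *m _); apply/matrixP => i j; rewrite (ord1 i).
split; rewrite ?conj_mul ?conj_sym //; apply: conj_eq => j; rewrite !mxE.
- by have [->|/mulfV->] := eqVneq (d 0 j) 0; rewrite ?mul0r ?mul1r.
- by have [->|/mulVf->] := eqVneq (d 0 j) 0; rewrite ?invr0 ?mul0r ?mul1r.
Qed.

Lemma pinv_is_MP_inverse m n (A : 'M[R]_(m, n)) (B : 'M[R]_(n, m)) :
  is_MP_inverse A B -> is_MP_inverse A (pinv A).
Proof. by move=> AB; apply: epsilon_spec; exists B. Qed.

Lemma sv_mx_gram_is_diag N k (s : 'I_k -> R) :
  is_diag_mx ((sv_mx N s)^T *m sv_mx N s).
Proof.
apply/is_diag_mxP => i j ij; rewrite mxE; apply: big1 => l _; rewrite !mxE.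
case: eqP => [li|]; case: eqP => [lj|]; rewrite ?mul0r ?mulr0 //.
by move: ij; rewrite -li -lj eqxx.
Qed.

Lemma SVD_gram N k (X : 'M[R]_(N, k)) U V s :
  is_SVD X U V s -> exists d, X^T *m X = V *m diag_mx d *m V^T.
Proof.
case=> [[orthoU _] _ _ _ ->].
have /diag_mxP[d gramS] := sv_mx_gram_is_diag N s.
exists d; rewrite -gramS !trmx_mul trmxK !mulmxA -(mulmxA _ U^T) orthoU mulmx1.
by rewrite -!mulmxA; congr (_ *m _); rewrite !mulmxA.
Qed.

Lemma trmx_mul_projPC N k (X : 'M[R]_(N, k)) U V s :
  is_SVD X U V s -> X^T *m (1%:M - projP X) = 0.
Proof.
move=> svdX; have [d gramX] := SVD_gram svdX.
have [[_ _] [orthoV _] _ _ _] := svdX.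
have MP_gram := is_MP_inverse_orthogonal_diag d orthoV; rewrite -gramX in MP_gram.
by have [gram_pinv _ _ _] := pinv_is_MP_inverse MP_gram; apply: trmx_mul_projC.
Qed.

Lemma projPn_mul_projH_eq0 N k l (X : 'M[R]_(N, k)) (Y : 'M[R]_(N, l)) U V s :
  is_SVD X U V s -> X^T *m Y = 0 ->
  forall (V' : 'M[R]_k) s' (W : 'M[R]_l) t m n,
  projPn X V' s' m *m (projPn Y W t n + 1%:M - projP X - projP Y) = 0.
Proof.
move=> svdX XtY0 V' s' W t m n.
have -> : projPn Y W t n + 1%:M - projP X - projP Y
          = Y *m (pinv (XtX_n W t n) *m Y^T - pinv (Y^T *m Y) *m Y^T)
            + (1%:M - projP X).
  rewrite /projPn /projP mulmxBr !mulmxA addrAC -!addrA.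
  by congr (_ + _); rewrite addrCA.
rewrite /projPn -mulmxA mulmxDr !mulmxA XtY0 mul0mx add0r.
by rewrite (trmx_mul_projPC svdX) mulmx0.
Qed.

End PseudoInverse.

Theorem mainTheorem5 (R : realFieldType) (N NS NL : nat)
    (Sig : 'M[R]_(N, NS)) (Lam : 'M[R]_(N, NL))
    (US : 'M[R]_N) (VS : 'M[R]_NS) (sS : 'I_NS -> R)
    (UL : 'M[R]_N) (VL : 'M[R]_NL) (sL : 'I_NL -> R) :
  signed_incidence Sig -> signed_incidence Lam ->
  Sig^T *m Lam = 0 ->
  is_SVD Sig US VS sS -> is_SVD Lam UL VL sL ->
  (forall m n : nat, (1 <= m <= NS)%N -> (1 <= n <= NL)%N ->
     projPn Sig VS sS m *m
       (projPn Lam VL sL n + 1%:M - projP Sig - projP Lam) = 0) /\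
  (forall m n : nat, (1 <= m <= NL)%N -> (1 <= n <= NS)%N ->
     projPn Lam VL sL m *m
       (projPn Sig VS sS n + 1%:M - projP Lam - projP Sig) = 0).
Proof.
move=> _ _ SigtLam0 svdSig svdLam.
have LamtSig0 : Lam^T *m Sig = 0 by rewrite -(trmxK Sig) -trmx_mul SigtLam0 trmx0.
split=> m n _ _.
- exact: (projPn_mul_projH_eq0 svdSig SigtLam0).
- exact: (projPn_mul_projH_eq0 svdLam LamtSig0).
Qed.
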